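(* Let $F$ be a field, $d\ge 2$ an integer and $\alpha\in F$. Identify the set of monic polynomials $x^d+\sum_{i=0}^{d-1}a_ix^i$ over $F$ with the affine space $F^d$ via $(a_0,\dots,a_{d-1})$. Let $\mathcal{P}\subseteq F^d$ be the set of monic polynomials of degree $d$ over $F$ that have a monic polynomial factor $q(x)$ of degree $m$ with $1\le m\le d-1$ whose constant term equals $\alpha$. Then $\mathcal{P}$ is contained in an affine hypersurface of $F^d$, i.e. there is a nonzero polynomial $H\in F[a_0,\dots,a_{d-1}]$ vanishing at every point of $\mathcal{P}$. *)

From HB Require Import structures.
From mathcomp Require Import all_boot all_algebra.
From mathcomp Require Import mpoly.
Set Implicit Arguments. Unset Strict Implicit. Unset Printing Implicit Defensive.
Import GRing.Theory.
Local Open Scope ring_scope.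

Definition monic_of (F : fieldType) (d : nat) (a : 'I_d -> F) : {poly F} :=
  'X^d + \sum_(i < d) (a i)%:P * 'X^i.

Definition in_calP (F : fieldType) (d : nat) (alpha : F) (a : 'I_d -> F) : Prop :=
  exists q : {poly F},
    [/\ q \is monic, (q %| monic_of a)%R,
        (1 <= (size q).-1 <= d.-1)%N & q`_0 = alpha].

From HB Require Import structures.
From mathcomp Require Import all_boot all_algebra.
From mathcomp Require Import mpoly.
From mathcomp Require Import zify.
Import GRing.Theory.
Local Open Scope ring_scope.
Set Implicit Arguments. Unset Strict Implicit. Unset Printing Implicit Defensive.

(* Splitting off a monic factor q of degree m with q(0) = alpha writes a point
   of P as the coefficient vector of a product q * r, where q and r are monic
   and q(0) is fixed: the remaining d - 1 coefficients of q and r are free, so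
   the points of P with a given m lie in the image of a polynomial map
   F^(d-1) -> F^d of degree 2.  The d components of a polynomial map of degree
   e in n < d variables are algebraically dependent: with K = (e d)^n, the
   (K + 1)^d products of their powers with exponents at most K all lie in the
   space of polynomials with exponents at most e d K, of dimension
   (e d K + 1)^n < (K + 1)^d, so some nontrivial combination of them vanishes.
   That combination is a nonzero H vanishing on the image; the product of the
   H obtained for m = 1, ..., d - 1 vanishes on P. *)

Lemma exists_nontrivial_linear_relation (F : fieldType) (I J : finType)
    (f : I -> J -> F) :
  (#|J| < #|I|)%N ->
  exists c : I -> F, (exists i, c i != 0) /\ forall j, \sum_i c i * f i j = 0.
Proof.
move=> ltJI.
pose M := \matrix_(k < #|I|, l < #|J|) f (enum_val k) (enum_val l).
have /rowV0Pn[v /sub_kermxP vM nz_v] : kermx M != 0.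
  rewrite -mxrank_eq0 mxrank_ker subn_eq0 -ltnNge.
  exact: leq_ltn_trans (rank_leq_col M) ltJI.
exists (fun i => v 0 (enum_rank i)); split.
  have [k nz_vk] : exists k, v 0 k != 0.
    apply/existsP; apply: contraNT nz_v; rewrite negb_exists => /forallP v0.
    by apply/eqP/rowP => k; rewrite mxE; apply/eqP/negPn/v0.
  by exists (enum_val k); rewrite enum_valK.
move=> j; have /rowP/(_ (enum_rank j)) := vM; rewrite !mxE => vMj.
rewrite -[RHS]vMj [LHS](reindex (enum_val : 'I_#|I| -> I)) /=.
  by apply: eq_bigr => k _; rewrite enum_valK mxE enum_rankK.
exact: onW_bij _ (enum_val_bij I).
Qed.

Lemma expn_count_lt (c n d : nat) : (0 < c)%N -> (n < d)%N ->
  ((c ^ n.+1).+1 ^ n < (c ^ n).+1 ^ d)%N.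
Proof.
move=> c_gt0 lt_nd.
have le_pow : ((c ^ n.+1).+1 ^ n <= (c * (c ^ n).+1) ^ n)%N.
  have [->|n_gt0] := posnP n; first by rewrite !expn0.
  by rewrite leq_exp2r // expnS; nia.
apply: leq_ltn_trans le_pow _; rewrite expnMn.
apply: (@leq_trans ((c ^ n).+1 ^ n.+1)).
  by rewrite expnS ltn_pmul2r ?expn_gt0.
exact: leq_pexp2l.
Qed.

Lemma msizeM_le_pred (R : idomainType) n (p q : {mpoly R[n]}) :
  (msize (p * q) <= (msize p + msize q).-1)%N.
Proof.
have [->|nz_p] := eqVneq p 0; first by rewrite mul0r msize0.
have [->|nz_q] := eqVneq q 0; first by rewrite mulr0 msize0.
by rewrite msizeM.
Qed.

Lemma msizeX_le (R : idomainType) n e (p : {mpoly R[n]}) k :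
  (msize p <= e.+1)%N -> (msize (p ^+ k) <= (e * k).+1)%N.
Proof.
move=> le_p; elim: k => [|k IHk]; first by rewrite expr0 msize1.
rewrite exprS; apply: leq_trans (msizeM_le_pred _ _) _.
have := leq_add le_p IHk; lia.
Qed.

Lemma msize_prodX_le (R : idomainType) n d e (phi : 'I_d -> {mpoly R[n]})
    (k : 'I_d -> nat) :
  (forall i, msize (phi i) <= e.+1)%N ->
  (msize (\prod_(i < d) phi i ^+ k i) <= (e * \sum_(i < d) k i).+1)%N.
Proof.
move=> le_phi; elim/big_rec2: _ => [|i s p _ IHp]; first by rewrite msize1.
apply: leq_trans (msizeM_le_pred _ _) _.
have := leq_add (msizeX_le (k i) (le_phi i)) IHp; lia.
Qed.

Lemma msize_coefM_le (R : idomainType) n e1 e2 (p q : {poly {mpoly R[n]}}) :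
  (forall j, msize p`_j <= e1.+1)%N -> (forall j, msize q`_j <= e2.+1)%N ->
  forall i, (msize (p * q)`_i <= (e1 + e2).+1)%N.
Proof.
move=> le_p le_q i; rewrite coefM.
elim/big_rec: _ => [|j s _ le_s]; first by rewrite msize0.
apply: leq_trans (mmeasureD_le _ _ _) _; rewrite geq_max le_s andbT.
apply: leq_trans (msizeM_le_pred _ _) _.
have := leq_add (le_p j) (le_q (i - j)%N); lia.
Qed.

Definition in_hypersurface (F : fieldType) d (S : ('I_d -> F) -> Prop) :=
  exists H : {mpoly F[d]}, H != 0 /\ forall a, S a -> H.@[a] = 0.

Lemma in_hypersurface_bigcup (F : fieldType) (d : nat) (s : seq nat)
    (S : nat -> ('I_d -> F) -> Prop) :
  (forall m, m \in s -> in_hypersurface (S m)) ->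
  in_hypersurface (fun a => exists2 m, m \in s & S m a).
Proof.
elim: s => [|m s IHs] hypS.
  by exists 1; split=> [|a [m]]; rewrite ?oner_neq0.
have [Hm [nz_Hm HmS]] := hypS m (mem_head m s).
have [Hs [nz_Hs HsS]] :
    in_hypersurface (fun a => exists2 m', m' \in s & S m' a).
  by apply: IHs => m' s_m'; apply: hypS; rewrite in_cons s_m' orbT.
exists (Hm * Hs); split=> [|a [m']]; first by rewrite mulf_neq0.
rewrite inE mevalM => /predU1P[-> /HmS -> | s_m' Sa]; first by rewrite mul0r.
by rewrite (HsS a) ?mulr0 //; exists m'.
Qed.

Section PolynomialMapImage.
Variables (F : fieldType) (n d e : nat) (phi : 'I_d -> {mpoly F[n]}).
Hypotheses (lt_nd : (n < d)%N) (e_gt0 : (0 < e)%N).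
Hypothesis msize_phi : forall i, (msize (phi i) <= e.+1)%N.

Let K := ((e * d) ^ n)%N.
Let E := ((e * d) ^ n.+1)%N.
Let mon (k : {ffun 'I_d -> 'I_K.+1}) : 'X_{1..d} :=
  [multinom (k i : nat) | i < d].
Let mon' (l : {ffun 'I_n -> 'I_E.+1}) : 'X_{1..n} :=
  [multinom (l i : nat) | i < n].
Let G (k : {ffun 'I_d -> 'I_K.+1}) : {mpoly F[n]} := \prod_(i < d) phi i ^+ k i.

Let mon_inj : injective mon.
Proof.
move=> k1 k2 /mnmP eq_mon; apply/ffunP => i; apply/val_inj.
by have := eq_mon i; rewrite !mnmE.
Qed.

Let msize_G k : (msize (G k) <= E.+1)%N.
Proof.
apply: leq_trans (msize_prodX_le _ msize_phi) _; rewrite ltnS /E expnS.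
have : (\sum_(i < d) k i <= \sum_(i < d) K)%N.
  by apply: leq_sum => i _; rewrite -ltnS ltn_ord.
rewrite sum_nat_const card_ord /K; nia.
Qed.

Lemma polynomial_map_image_in_hypersurface :
  in_hypersurface (fun a => exists b : 'I_n -> F, forall i, (phi i).@[b] = a i).
Proof.
have card_lt :
    (#|{: {ffun 'I_n -> 'I_E.+1}}| < #|{: {ffun 'I_d -> 'I_K.+1}}|)%N.
  rewrite !card_ffun !card_ord; apply: expn_count_lt => //.
  by rewrite muln_gt0 e_gt0; lia.
have [c [[k0 nz_ck0] c_rel]] :=
  exists_nontrivial_linear_relation (fun k l => (G k)@_(mon' l)) card_lt.
exists (\sum_k c k *: 'X_[mon k]); split.
  apply: contraNneq nz_ck0 => /(congr1 (mcoeff (mon k0))).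
  rewrite raddf_sum (bigD1 k0) //= mcoeffZ mcoeffX eqxx mulr1.
  rewrite big1 ?addr0 ?mcoeff0 => [/eqP //|k ne_k].
  by rewrite mcoeffZ mcoeffX (inj_eq mon_inj) (negbTE ne_k) mulr0.
have sum_G : \sum_k c k *: G k = 0.
  apply/mpolyP => mo; rewrite mcoeff0 raddf_sum /=.
  have [le_mo|lt_mo] := leqP (mdeg mo) E.
    pose l : {ffun 'I_n -> 'I_E.+1} := [ffun i => inord (mo i)].
    have -> : mo = mon' l.
      apply/mnmP => i; rewrite mnmE ffunE inordK // ltnS.
      by apply: leq_trans le_mo; rewrite mdegE (bigD1 i) //= leq_addr.
    by rewrite -[RHS](c_rel l); apply: eq_bigr => k _; rewrite mcoeffZ.
  apply: big1 => k _; rewrite mcoeffZ.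
  suff /eqP -> : (G k)@_mo == 0 by rewrite mulr0.
  by rewrite mcoeff_eq0; apply: msize_mdeg_ge; apply: leq_trans (msize_G k) _.
move=> a [b phi_b]; rewrite -(meval_eq _ phi_b) -[RHS](meval0 b) -sum_G.
rewrite !raddf_sum; apply: eq_bigr => k _.
rewrite /= !mevalZ mevalX rmorph_prod; congr (_ * _); apply: eq_bigr => i _.
by rewrite rmorphXn mnmE.
Qed.

End PolynomialMapImage.

Definition monic_poly (R : nzRingType) (k : nat) (c : nat -> R) : {poly R} :=
  'X^k + \poly_(j < k) c j.

Lemma coef_monic_poly (R : nzRingType) k (c : nat -> R) j :
  (monic_poly k c)`_j = if (j < k)%N then c j else (j == k)%:R.
Proof.
rewrite coefD coefXn coef_poly; case: ltnP => [lt_jk|_]; last exact: addr0.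
by rewrite (ltn_eqF lt_jk) add0r.
Qed.

Lemma size_monic_poly (R : nzRingType) k (c : nat -> R) :
  size (monic_poly k c) = k.+1.
Proof. by rewrite size_polyDl size_polyXn // ltnS size_poly. Qed.

Lemma monic_poly_monic (R : nzRingType) k (c : nat -> R) :
  monic_poly k c \is monic.
Proof.
by rewrite monicE lead_coefDl ?lead_coefXn // size_polyXn ltnS size_poly.
Qed.

Lemma monic_polyE (R : nzRingType) (p : {poly R}) :
  p \is monic -> p = monic_poly (size p).-1 (fun j => p`_j).
Proof.
move=> mon_p; have := monic_neq0 mon_p; rewrite -size_poly_gt0 => sz_p.
apply/polyP => j; rewrite coef_monic_poly; case: ltnP => // le_pj.
case: eqP => [->|/eqP ne_j]; first by rewrite -lead_coefE (monicP mon_p).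
by rewrite nth_default // -(prednK sz_p) ltn_neqAle eq_sym ne_j.
Qed.

Lemma eq_monic_poly (R : nzRingType) k (c1 c2 : nat -> R) :
  (forall j, j < k -> c1 j = c2 j)%N -> monic_poly k c1 = monic_poly k c2.
Proof. by move=> eq_c; rewrite /monic_poly (eq_poly c2 eq_c). Qed.

Lemma map_monic_poly (R S : nzRingType) (f : {rmorphism R -> S}) k
    (c : nat -> R) :
  map_poly f (monic_poly k c) = monic_poly k (f \o c).
Proof.
apply/polyP => j; rewrite coef_map !coef_monic_poly.
by case: ltnP => //= _; rewrite rmorph_nat.
Qed.

Lemma msize_coef_monic_poly (R : nzRingType) n e (c : nat -> {mpoly R[n]}) k :
  (forall j, msize (c j) <= e.+1)%N ->
  forall j, (msize (monic_poly k c)`_j <= e.+1)%N.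
Proof.
move=> le_c j; rewrite coef_monic_poly; case: ltnP => // _.
by case: eqP; rewrite ?msize1 ?msize0.
Qed.

Lemma monic_ofE (F : fieldType) d (a : 'I_d -> F) :
  monic_of a = monic_poly d (fun j => if insub j is Some i then a i else 0).
Proof.
rewrite /monic_of /monic_poly poly_def; congr (_ + _); apply: eq_bigr => i _.
by rewrite mul_polyC valK.
Qed.

Section MonicFactorization.
Variables (F : fieldType) (d : nat) (alpha : F) (m : nat).

Local Notation n := d.-1.

Definition coord (k : nat) : {mpoly F[n]} :=
  if insub k is Some i then 'X_i else 0.

(* Coordinates 0, ..., m - 2 are the coefficients of x, ..., x^(m-1) in the
   factor q; coordinates m - 1, ..., d - 2 those of 1, ..., x^(d-m-1) in the
   cofactor r. *)
Definition generic_factor : {poly {mpoly F[n]}} :=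
  monic_poly m (fun j => if j == 0%N then alpha%:MP else coord j.-1).

Definition generic_cofactor : {poly {mpoly F[n]}} :=
  monic_poly (d - m) (fun j => coord (m.-1 + j)).

Definition factor_map (i : 'I_d) : {mpoly F[n]} :=
  (generic_factor * generic_cofactor)`_i.

Lemma msize_coord k : (msize (coord k) <= 2)%N.
Proof.
by rewrite /coord; case: insubP => [i _ _|_]; rewrite ?msizeX ?mdeg1 ?msize0.
Qed.

Lemma msize_factor_map i : (msize (factor_map i) <= 3)%N.
Proof.
apply: (@msize_coefM_le _ _ 1 1); apply: msize_coef_monic_poly => j;
  last exact: msize_coord.
case: eqP => _; last exact: msize_coord.
by rewrite -/(msize _) mmeasureC; case: (alpha != 0).
Qed.

Lemma meval_coord (b : 'I_n -> F) k (lt_kn : (k < n)%N) :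
  (coord k).@[b] = b (Ordinal lt_kn).
Proof. by rewrite /coord insubT mevalXU. Qed.

Hypotheses (m_gt0 : (0 < m)%N) (lt_md : (m < d)%N).

Definition split_coords (u v : nat -> F) (i : 'I_n) : F :=
  if (i < m.-1)%N then u i.+1 else v (i - m.-1)%N.

Lemma map_generic_factor (u v : nat -> F) : u 0%N = alpha ->
  map_poly (meval (split_coords u v)) generic_factor = monic_poly m u.
Proof.
move=> u0; rewrite map_monic_poly; apply: eq_monic_poly => j lt_jm /=.
case: eqP => [->|/eqP nz_j]; first by rewrite mevalC.
have lt_jn : (j.-1 < n)%N by lia.
by rewrite (meval_coord _ lt_jn) /split_coords /= ifT ?prednK ?lt0n //; lia.
Qed.

Lemma map_generic_cofactor (u v : nat -> F) :
  map_poly (meval (split_coords u v)) generic_cofactor = monic_poly (d - m) v.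
Proof.
rewrite map_monic_poly; apply: eq_monic_poly => j lt_jdm /=.
have lt_jn : (m.-1 + j < n)%N by lia.
by rewrite (meval_coord _ lt_jn) /split_coords /= ifF ?addKn //; lia.
Qed.

Lemma in_factor_map_image (a : 'I_d -> F) (q : {poly F}) :
  q \is monic -> (q %| monic_of a)%R -> (size q).-1 = m -> q`_0 = alpha ->
  exists b : 'I_n -> F, forall i, (factor_map i).@[b] = a i.
Proof.
move=> mon_q dvd_q sz_q q0.
set r := monic_of a %/ q.
have rq : r * q = monic_of a by rewrite divpK.
have mon_r : r \is monic.
  by rewrite -(monicMr _ mon_q) rq monic_ofE monic_poly_monic.
have sz_r : size r = (d - m).+1.
  have q_gt0 : (0 < size q)%N by rewrite size_poly_gt0 monic_neq0.
  have := size_Mmonic (monic_neq0 mon_r) mon_q.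
  rewrite rq monic_ofE size_monic_poly -(prednK q_gt0) sz_q addnS /= => d_eq.
  by rewrite -subSn ?(ltnW lt_md) // d_eq addnK.
have q_eq : monic_poly m (fun j => q`_j) = q.
  by rewrite [RHS]monic_polyE // sz_q.
have r_eq : monic_poly (d - m) (fun j => r`_j) = r.
  by rewrite [RHS]monic_polyE // sz_r.
exists (split_coords (fun j => q`_j) (fun j => r`_j)) => i.
rewrite /factor_map -coef_map rmorphM /=.
rewrite map_generic_factor // map_generic_cofactor.
by rewrite q_eq r_eq mulrC rq monic_ofE coef_monic_poly ltn_ord valK.
Qed.

End MonicFactorization.

Theorem theorem2p1 (F : fieldType) (d : nat) (hd : (2 <= d)%N) (alpha : F) :
  exists H : {mpoly F[d]}, H != 0 /\
    forall a : 'I_d -> F, in_calP alpha a -> H.@[a] = 0.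
Proof.
have [H [nz_H H_vanishes]] : in_hypersurface (fun a : 'I_d -> F =>
    exists2 m, m \in index_iota 1 d &
      exists b, forall i, (factor_map alpha m i).@[b] = a i).
  apply: in_hypersurface_bigcup => m.
  rewrite mem_index_iota => /andP[m_gt0 lt_md].
  apply: (@polynomial_map_image_in_hypersurface _ _ _ 2) => //; first by lia.
  exact: msize_factor_map.
exists H; split=> // a [q [mon_q dvd_q /andP[q_ge1 q_le] q0]].
apply: H_vanishes; exists (size q).-1; first by rewrite mem_index_iota; lia.
have lt_qd : ((size q).-1 < d)%N by lia.
by apply: (in_factor_map_image q_ge1 lt_qd mon_q dvd_q).
Qed.
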